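(* Let $(r,t)\in\{(2,3),(2,4)\}$, $\alpha=2^r-1=3$, $\beta=2^{t-1}-2^{r-1}$ (so $\beta=2$ or $\beta=6$), and let $\mathcal{C}\subseteq\mathbb{Z}_2^\alpha\times\mathbb{Z}_4^\beta$ be a $\mathbb{Z}_2\mathbb{Z}_4$-additive 1-perfect code. Let $\mathcal{C}'\subseteq\mathbb{Z}_2^{\alpha+1}\times\mathbb{Z}_4^\beta$ be obtained from $\mathcal{C}$ by inserting, at a fixed position of the $\mathbb{Z}_2$ part of every codeword $\mathbf{u}$, an extra binary coordinate equal to $w(\mathbf{u})\bmod 2$. Then $\mathcal{C}'$ is not $\mathbb{Z}_2\mathbb{Z}_4$-cyclic.
   Context: A $\mathbb{Z}_2\mathbb{Z}_4$-additive code is an additive subgroup of $\mathbb{Z}_2^\alpha\times\mathbb{Z}_4^\beta$; vectors are $\mathbf{u}=(u\mid u')$ with $u\in\mathbb{Z}_2^\alpha$, $u'\in\mathbb{Z}_4^\beta$. The weight is $w(\mathbf{u})=w_H(u)+w_L(u')$ (Hamming weight plus Lee weight, Lee weights of $0,1,2,3$ being $0,1,2,1$). The Gray map $\phi:\mathbb{Z}_4\to\mathbb{Z}_2^2$ is $0\mapsto(0,0),1\mapsto(0,1),2\mapsto(1,1),3\mapsto(1,0)$, $\Phi(u\mid u')=(u\mid\phi(u'_1),\dots,\phi(u'_\beta))$. A binary code $C\subseteq\mathbb{Z}_2^n$ is 1-perfect if the Hamming balls of radius 1 around its codewords partition $\mathbb{Z}_2^n$; a $\mathbb{Z}_2\mathbb{Z}_4$-additive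 code is 1-perfect if its Gray image is. With $\sigma(v_1,\dots,v_m)=(v_m,v_1,\dots,v_{m-1})$ and $\sigma(u\mid u')=(\sigma(u)\mid\sigma(u'))$, a code is $\mathbb{Z}_2\mathbb{Z}_4$-cyclic if closed under $\sigma$. *)

From mathcomp Require Import all_boot all_order all_algebra.
Set Implicit Arguments. Unset Strict Implicit. Unset Printing Implicit Defensive.
Import GRing.Theory.
Local Open Scope ring_scope.

Definition Z2Z4 (a b : nat) : finType := ('rV['Z_2]_a * 'rV['Z_4]_b)%type.

Definition z24add a b (u v : Z2Z4 a b) : Z2Z4 a b := (u.1 + v.1, u.2 + v.2).
Definition z24opp a b (u : Z2Z4 a b) : Z2Z4 a b := (- u.1, - u.2).
Definition z24zero a b : Z2Z4 a b := (0, 0).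

Definition additive_code a b (C : {set Z2Z4 a b}) : Prop :=
  z24zero a b \in C /\
  (forall u v, u \in C -> v \in C -> z24add u v \in C) /\
  (forall u, u \in C -> z24opp u \in C).

Definition wH n (u : 'rV['Z_2]_n) : nat := #|[set j | u ord0 j != 0%R]|.
Definition leeZ4 (x : 'Z_4) : nat :=
  if x == 0 then 0%N else if x == 2%:R then 2%N else 1%N.
Definition wL n (u : 'rV['Z_4]_n) : nat := (\sum_(j < n) leeZ4 (u ord0 j))%N.
Definition wt a b (u : Z2Z4 a b) : nat := (wH u.1 + wL u.2)%N.

Lemma half_idx_lt b (k : 'I_(b * 2)) : (k %/ 2 < b)%N.
Proof. by rewrite ltn_divLR // ltn_ord. Qed.

Definition gray (x : 'Z_4) : 'Z_2 * 'Z_2 :=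
  if x == 0 then (0, 0) else if x == 1 then (0, 1)
  else if x == 2%:R then (1, 1) else (1, 0).

Definition Phi a b (u : Z2Z4 a b) : 'rV['Z_2]_(a + b * 2) :=
  \row_(j < a + b * 2)
    match split j with
    | inl k => u.1 ord0 k
    | inr k => let p := gray (u.2 ord0 (Ordinal (half_idx_lt k))) in
               if odd k then p.2 else p.1
    end.

Definition dH n (x y : 'rV['Z_2]_n) : nat := #|[set j | x ord0 j != y ord0 j]|.
Definition perfect1 n (D : {set 'rV['Z_2]_n}) : Prop :=
  forall x : 'rV['Z_2]_n, exists! c, c \in D /\ (dH x c <= 1)%N.

Definition perfect_code a b (C : {set Z2Z4 a b}) : Prop :=
  perfect1 [set Phi u | u in C].

(* cyclic shift sigma(v_1..v_m) = (v_m, v_1, .., v_{m-1}) *)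
Definition cshift (R : Type) m (v : 'rV[R]_m) : 'rV[R]_m :=
  \row_j v ord0 (ord_pred j).
Definition sigma a b (u : Z2Z4 a b) : Z2Z4 a b := (cshift u.1, cshift u.2).
Definition cyclic_code a b (C : {set Z2Z4 a b}) : Prop :=
  forall u, u \in C -> sigma u \in C.

Definition ins_bit n (i : 'I_n.+1) (c : 'Z_2) (v : 'rV['Z_2]_n) : 'rV['Z_2]_n.+1 :=
  \row_j match unlift i j with None => c | Some k => v ord0 k end.

Definition parity_ext a b (i : 'I_a.+1) (C : {set Z2Z4 a b}) : {set Z2Z4 a.+1 b} :=
  [set ((ins_bit i (wt u)%:R u.1, u.2) : Z2Z4 a.+1 b) | u in C].

From mathcomp Require Import all_boot all_order all_algebra.
From mathcomp Require Import zify.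
Set Implicit Arguments. Unset Strict Implicit. Unset Printing Implicit Defensive.
Import GRing.Theory.
Local Open Scope ring_scope.

(* The Gray map turns w into Hamming distance, so a 1-perfect code C has
   minimum distance 3 and covering radius 1.  Assume the parity extension C'
   is cyclic.  Its codewords have even weight, and, as alpha = 3, two codewords
   of C (or of C') with the same Z4 part have equal or complementary binary
   parts.  Since beta = 2 mod 4, sigma^beta fixes the Z4 part and rotates the
   four binary coordinates by two; this forces even Hamming weight on them, so
   every codeword of C has even Lee weight.  Covering then yields, for each x of
   Lee weight 2, a codeword (a, x) with wH a = 1, and vectors x at Lee distance 2
   get distinct a.  For beta = 6, the four vectors e0 +- e1, e0 +- e2 would need
   four distinct weight-one vectors in Z_2^3.  For beta = 2, one application of
   sigma to the extensions of (a, (1,1)) and (a', (1,-1)) forces the binary part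
   [ins_bit i 1 a] to alternate, which pins a down from i alone, so a = a'. *)

Lemma Z2_pchar : 2%N \in [pchar 'Z_2].
Proof. exact: (@pchar_Fp 2). Qed.

Lemma Z2_addxx (x : 'Z_2) : x + x = 0.
Proof. exact: (addrr_pchar2 Z2_pchar). Qed.

Lemma Z2_neq0 (x : 'Z_2) : x != 0 -> x = 1.
Proof. by case: x => [[|[|?]] ?] // _; apply: val_inj. Qed.

Lemma natr_Z2_neq0 (x : 'Z_2) : (x != 0 : nat)%:R = x.
Proof. by case: x => [[|[|?]] ?] //; apply: val_inj. Qed.

Lemma leeZ4_eq0 (x : 'Z_4) : leeZ4 x = 0%N -> x = 0.
Proof. by case: x => [[|[|[|[|?]]]] ?] // _; apply: val_inj. Qed.

Lemma natr_leeZ4D (x z : 'Z_4) :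
  (leeZ4 (x + z))%:R = (leeZ4 x)%:R + (leeZ4 z)%:R :> 'Z_2.
Proof. by case: x => [[|[|[|[|?]]]] ?]; case: z => [[|[|[|[|?]]]] ?]; apply: val_inj. Qed.

Lemma gray_dist (x z : 'Z_4) :
  (((gray x).1 != (gray z).1) + ((gray x).2 != (gray z).2))%N = leeZ4 (x - z).
Proof. by case: x => [[|[|[|[|?]]]] ?]; case: z => [[|[|[|[|?]]]] ?] /=; vm_compute. Qed.

Lemma card_set_ord n (P : pred 'I_n) : #|[set j | P j]| = (\sum_j P j)%N.
Proof. by rewrite -sum1_card big_mkcond; apply: eq_bigr => j _; rewrite inE; case: (P j). Qed.

Lemma wH_sum n (v : 'rV['Z_2]_n) : wH v = (\sum_j (v ord0 j != 0%R))%N.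
Proof. exact: card_set_ord. Qed.

Lemma dH_sum n (x y : 'rV['Z_2]_n) : dH x y = (\sum_j (x ord0 j != y ord0 j))%N.
Proof. exact: card_set_ord. Qed.

Lemma natr_wH n (v : 'rV['Z_2]_n) : (wH v)%:R = \sum_j v ord0 j.
Proof.
by rewrite wH_sum natr_sum; apply: eq_bigr => j _; rewrite natr_Z2_neq0.
Qed.

Lemma natr_wH_addC n (v : 'rV['Z_2]_n) : (wH (v + const_mx 1))%:R = (wH v)%:R + n%:R :> 'Z_2.
Proof.
rewrite !natr_wH -[n in n%:R]card_ord -sumr_const -big_split.
by apply: eq_bigr => j _; rewrite !mxE.
Qed.

Lemma natr_wLD n (x z : 'rV['Z_4]_n) : (wL (x + z))%:R = (wL x)%:R + (wL z)%:R :> 'Z_2.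
Proof. by rewrite !natr_sum -big_split; apply: eq_bigr => j _; rewrite mxE natr_leeZ4D. Qed.

Lemma wH0 n : wH (0 : 'rV['Z_2]_n) = 0%N.
Proof. by rewrite wH_sum big1 // => j _; rewrite mxE. Qed.

Lemma wL0 n : wL (0 : 'rV['Z_4]_n) = 0%N.
Proof. by apply: big1 => j _; rewrite mxE. Qed.

Lemma wHN n (v : 'rV['Z_2]_n) : wH (- v) = wH v.
Proof. by rewrite !wH_sum; apply: eq_bigr => j _; rewrite mxE oppr_eq0. Qed.

Lemma wH_eq0 n (v : 'rV['Z_2]_n) : wH v = 0%N -> v = 0.
Proof.
move/eqP; rewrite wH_sum sum_nat_eq0 => /forallP v0; apply/rowP => j.
by move: (v0 j); rewrite eqb0 negbK mxE => /eqP.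
Qed.

Lemma wL_eq0 n (x : 'rV['Z_4]_n) : wL x = 0%N -> x = 0.
Proof.
move/eqP; rewrite /wL sum_nat_eq0 => /forallP x0; apply/rowP => j.
by rewrite mxE; apply/leeZ4_eq0/eqP/x0.
Qed.

Lemma wH_full n (v : 'rV['Z_2]_n) : (n <= wH v)%N -> forall j, v ord0 j != 0.
Proof.
move=> vn j; apply: contraTneq vn => vj; rewrite -ltnNge.
have /subset_leq_card : [set k | v ord0 k != 0] \subset [set~ j].
  by apply/subsetP => k; rewrite !inE; apply: contraNneq => ->; rewrite vj.
rewrite cardsC1 card_ord /wH; have := ltn_ord j; lia.
Qed.

Lemma weight1_delta n (v : 'rV['Z_2]_n) : wH v = 1%N -> exists j, v = delta_mx 0 j.
Proof.
move=> /eqP /cards1P [j vj]; exists j; apply/rowP => k; rewrite !mxE eqxx /=.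
move/setP/(_ k): vj; rewrite !inE.
by case: (k =P j) => [_ /Z2_neq0 | _ /negbFE /eqP].
Qed.

Lemma wH_const n (c : 'Z_2) : wH (const_mx c : 'rV_n) = if c == 0 then 0%N else n.
Proof.
rewrite wH_sum; under eq_bigr do rewrite mxE.
by case: (c =P 0) => _; [rewrite big1 | rewrite big_const_ord iter_addn_0 mul1n].
Qed.

Lemma wH_ins_bit n (i : 'I_n.+1) (c : 'Z_2) (v : 'rV_n) :
  wH (ins_bit i c v) = ((c != 0%R) + wH v)%N.
Proof.
rewrite !wH_sum (bigD1_ord i) //= mxE unlift_none; congr addn.
by apply: eq_bigr => j _; rewrite mxE liftK.
Qed.

Lemma ins_bit_inj n (i : 'I_n.+1) (c : 'Z_2) : injective (ins_bit i c).
Proof. by move=> v w /rowP vw; apply/rowP => j; move: (vw (lift i j)); rewrite !mxE liftK. Qed.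

Lemma ins_bit_addC n (i : 'I_n.+1) (c : 'Z_2) (v : 'rV_n) :
  ins_bit i c v + const_mx 1 = ins_bit i (c + 1) (v + const_mx 1).
Proof. by apply/rowP => j; rewrite !mxE; case: unliftP => [k _|_]; rewrite ?mxE. Qed.

Lemma dH_refl n (x : 'rV['Z_2]_n) : dH x x = 0%N.
Proof. by rewrite dH_sum big1 // => j _; rewrite eqxx. Qed.

Lemma dH_le2_midpoint n (x y : 'rV['Z_2]_n) :
  (dH x y <= 2)%N -> exists z, (dH z x <= 1)%N /\ (dH z y <= 1)%N.
Proof.
move=> xy2; have [xy1|xy_gt1] := leqP (dH x y) 1; first by exists x; rewrite dH_refl.
pose D := [set k | x ord0 k != y ord0 k].
have /card_gt0P[j jD] : (0 < #|D|)%N by move: xy_gt1; rewrite /dH -/D; lia.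
exists (\row_k (if k == j then y ord0 j else x ord0 k)); split.
  rewrite /dH -[X in (_ <= X)%N](cards1 j); apply/subset_leq_card/subsetP => k.
  by rewrite !inE mxE; case: (k =P j) => // _; rewrite eqxx.
apply: (@leq_trans #|D :\ j|).
  apply/subset_leq_card/subsetP => k; rewrite !inE mxE.
  by case: (k =P j) => [->|]; rewrite ?eqxx.
by move: xy2; rewrite /dH -/D (cardsD1 j D) jD; lia.
Qed.

Lemma sum_ord_pairs b (F : 'I_b -> bool -> nat) :
  (\sum_(k < b * 2) F (Ordinal (half_idx_lt k)) (odd k)
   = \sum_(m < b) (F m false + F m true))%N.
Proof.
have lt_pair (p : 'I_b * bool) : (p.1 * 2 + p.2 < b * 2)%N.
  by case: p => m o /=; have := ltn_ord m; case: o => /=; lia.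
pose h p := Ordinal (lt_pair p).
pose g (k : 'I_(b * 2)) := (Ordinal (half_idx_lt k), odd k).
have hK : cancel h g.
  case=> m o; rewrite /g /=; congr pair; last by rewrite oddD oddM andbF; case: o.
  by apply: val_inj => /=; case: o => /=; lia.
rewrite -[LHS]/(\sum_k F (g k).1 (g k).2)%N (reindex h); last first.
  by exists g => // k _; apply: val_inj; rewrite /= divn2 muln2 addnC odd_double_half.
under eq_bigr do rewrite hK.
by rewrite -pair_bigA; apply: eq_bigr => m _; rewrite big_bool addnC.
Qed.

Lemma dH_Phi a b (y u : Z2Z4 a b) :
  dH (Phi y) (Phi u) = (wH (y.1 - u.1) + wL (y.2 - u.2))%N.
Proof.
rewrite dH_sum big_split_ord; congr addn.
  by rewrite wH_sum; apply: eq_bigr => k _; rewrite !mxE (unsplitK (inl _ k)) subr_eq0.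
pose H (m : 'I_b) (o : bool) :=
  ((if o then (gray (y.2 ord0 m)).2 else (gray (y.2 ord0 m)).1)
   != (if o then (gray (u.2 ord0 m)).2 else (gray (u.2 ord0 m)).1) : nat).
transitivity (\sum_(k < b * 2) H (Ordinal (half_idx_lt k)) (odd k))%N.
  by apply: eq_bigr => k _; rewrite !mxE (unsplitK (inr _ k)); case: (odd k).
by rewrite sum_ord_pairs; apply: eq_bigr => m _; rewrite !mxE -gray_dist.
Qed.

Lemma Phi_inj a b : injective (@Phi a b).
Proof.
move=> u v Puv; have := dH_Phi u v; rewrite Puv dH_refl => /esym/eqP.
rewrite addn_eq0 => /andP[/eqP/wH_eq0/eqP + /eqP/wL_eq0/eqP].
by rewrite !subr_eq0; case: u v {Puv} => ? ? [? ?] /= /eqP-> /eqP->.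
Qed.

Section PerfectCode.
Variables (a b : nat) (C : {set Z2Z4 a b}).
Hypothesis C_perfect : perfect_code C.

Lemma perfect_code_dist u v : u \in C -> v \in C -> u <> v ->
  (3 <= wH (u.1 - v.1) + wL (u.2 - v.2))%N.
Proof.
move=> uC vC uv; rewrite leqNgt; apply/negP => d_lt3.
have [z [zu zv]] : exists z, (dH z (Phi u) <= 1)%N /\ (dH z (Phi v) <= 1)%N.
  by apply: dH_le2_midpoint; rewrite dH_Phi; lia.
have [c [_ c_uniq]] := C_perfect z.
apply/uv/Phi_inj; rewrite -(c_uniq (Phi u)) ?(c_uniq (Phi v)) //.
  by split=> //; apply: imset_f.
by split=> //; apply: imset_f.
Qed.

Lemma perfect_code_covering y :
  exists2 u, u \in C & (wH (y.1 - u.1) + wL (y.2 - u.2) <= 1)%N.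
Proof.
have [_ [[/imsetP [u uC ->] yu] _]] := C_perfect (Phi y).
by exists u; rewrite // -dH_Phi.
Qed.

Lemma perfect_code_Z2_neq a1 a2 x1 x2 :
  (a1, x1) \in C -> (a2, x2) \in C -> wL (x1 - x2) = 2%N -> a1 != a2.
Proof.
move=> ax1 ax2 x12; apply/eqP => a12; move: ax1; rewrite a12 => ax1.
have x1_neq : x1 <> x2 by move=> x1E; move: x12; rewrite x1E subrr wL0.
have := perfect_code_dist ax1 ax2 (fun E => x1_neq (congr1 snd E)).
by rewrite /= subrr x12 wH0.
Qed.

End PerfectCode.

Lemma iter_can (T : Type) (f g : T -> T) k : cancel f g -> cancel (iter k f) (iter k g).
Proof. by move=> fK x; elim: k => // k IH; rewrite iterSr iterS fK IH. Qed.

Lemma val_iter_ordS n k (j : 'I_n) : val (iter k (@ordS n) j) = ((j + k) %% n)%N.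
Proof.
elim: k => [|k IH] /=; first by rewrite addn0 modn_small.
by rewrite IH -addn1 modnDml addn1 addnS.
Qed.

Lemma iter_ord_pred_id n (j : 'I_n) : iter n (@ord_pred n) j = j.
Proof.
have ordS_id : iter n (@ordS n) j = j.
  by apply: val_inj; rewrite val_iter_ordS modnDr modn_small.
by rewrite -{1}ordS_id iter_can //; apply: ordSK.
Qed.

Lemma iter_cshiftE (R : Type) n k (v : 'rV[R]_n) j :
  iter k (@cshift R n) v ord0 j = v ord0 (iter k (@ord_pred n) j).
Proof. by elim: k j => [|k IH] j //=; rewrite mxE IH -iterSr. Qed.

Lemma iter_cshift_id (R : Type) n (v : 'rV[R]_n) : iter n (@cshift R n) v = v.
Proof. by apply/rowP => j; rewrite iter_cshiftE iter_ord_pred_id. Qed.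

Lemma wL_cshift n (x : 'rV['Z_4]_n) : wL (cshift x) = wL x.
Proof.
rewrite /wL (reindex_inj (@ordS_inj n)); apply: eq_bigr => j _.
by rewrite mxE ordSK.
Qed.

Lemma cshiftB (R : zmodType) n (v w : 'rV[R]_n) : cshift (v - w) = cshift v - cshift w.
Proof. by apply/rowP => j; rewrite !mxE. Qed.

Lemma cshift_fixed (R : Type) n (v : 'rV[R]_n.+1) : cshift v = v -> v = const_mx (v ord0 ord0).
Proof.
move=> /rowP vK; apply/rowP => -[j lt_j]; rewrite mxE.
elim: j lt_j => [|j IH] lt_j; first by congr (v _ _); apply: val_inj.
rewrite -vK mxE -(IH (ltnW lt_j)); congr (v _ _); apply: val_inj => /=.
by rewrite modnDr modn_small // ltnW.
Qed.

Lemma cshift_addC_inj (R : zmodType) n (v w : 'rV[R]_n.+1) c j :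
  cshift v = v + const_mx c -> cshift w = w + const_mx c -> v ord0 j = w ord0 j -> v = w.
Proof.
move=> vE wE vwj; apply/eqP; rewrite -subr_eq0; apply/eqP.
have /cshift_fixed vw_const : cshift (v - w) = v - w.
  by rewrite cshiftB vE wE [w + _]addrC addrKA.
move/rowP: (vw_const) => /(_ j); rewrite !mxE vwj subrr => vw0.
by rewrite vw_const; apply/rowP => k; rewrite !mxE -vw0.
Qed.

Lemma iter_sigma a b k (u : Z2Z4 a b) :
  iter k (@sigma a b) u = (iter k (@cshift _ a) u.1, iter k (@cshift _ b) u.2).
Proof. by elim: k => [|k IH] /=; [case: u | rewrite IH]. Qed.

Lemma cyclic_code_iter a b (D : {set Z2Z4 a b}) k u :
  cyclic_code D -> u \in D -> iter k (@sigma a b) u \in D.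
Proof. by move=> D_cyclic uD; elim: k => //= k IH; apply: D_cyclic. Qed.

Definition pext a b (i : 'I_a.+1) (u : Z2Z4 a b) : Z2Z4 a.+1 b :=
  (ins_bit i (wt u)%:R u.1, u.2).

Lemma natr_wH_pext a b (i : 'I_a.+1) (u : Z2Z4 a b) :
  (wH (pext i u).1)%:R = (wL u.2)%:R :> 'Z_2.
Proof. by rewrite wH_ins_bit natrD natr_Z2_neq0 natrD addrAC Z2_addxx add0r. Qed.

Lemma sum_rot2 (w : 'rV['Z_2]_4) :
  iter 2 (@cshift _ 4) w = w \/ iter 2 (@cshift _ 4) w = w + const_mx 1 ->
  \sum_j w ord0 j = 0.
Proof.
move=> w_rot2.
have [c wE] : exists c, forall j, w ord0 (iter 2 (@ord_pred 4) j) = w ord0 j + c.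
  by case: w_rot2 => /rowP E; [exists 0 | exists 1] => j; rewrite -iter_cshiftE E ?mxE ?addr0.
pose wo k := w ord0 (inord k).
have wo_rot2 k : (k < 2)%N -> wo k = wo k.+2 + c.
  by case: k => [|[|//]] _; rewrite -wE; congr (w _ _); apply: val_inj; rewrite /= !inordK.
have -> : \sum_j w ord0 j = wo 0%N + wo 2%N + (wo 1%N + wo 3%N).
  rewrite !big_ord_recl big_ord0 addr0 addrA addrACA.
  by congr (w _ _ + w _ _ + (w _ _ + w _ _)); apply: val_inj; rewrite /= inordK.
by rewrite (wo_rot2 0%N) ?(wo_rot2 1%N) // !(addrAC _ c) !Z2_addxx !add0r Z2_addxx.
Qed.

Section ParityExtension.
Variables (b : nat) (C : {set Z2Z4 3 b}) (i : 'I_4).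
Hypotheses (C_perfect : perfect_code C) (C'_cyclic : cyclic_code (parity_ext i C)).
Hypotheses (b_mod4 : (b %% 4 = 2)%N) (C_zero : z24zero 3 b \in C).

Lemma perfect_code_same_Z4 u v : u \in C -> v \in C -> u.2 = v.2 ->
  v.1 = u.1 \/ v.1 = u.1 + const_mx 1.
Proof.
move=> uC vC uv2; have [|vu1] := eqVneq v.1 u.1; [by left | right].
have vu : v <> u by move=> vuE; move: vu1; rewrite vuE eqxx.
have := perfect_code_dist C_perfect vC uC vu; rewrite uv2 subrr wL0 addn0 => /wH_full vu_full.
apply/rowP => j; move: (vu_full j); rewrite !mxE => /Z2_neq0/eqP.
by rewrite subr_eq addrC => /eqP.
Qed.

Lemma pext_same_Z4 u v : u \in C -> v \in C -> u.2 = v.2 ->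
  (pext i v).1 = (pext i u).1 \/ (pext i v).1 = (pext i u).1 + const_mx 1.
Proof.
move=> uC vC uv2; rewrite /= /wt -uv2.
case: (perfect_code_same_Z4 uC vC uv2) => ->; [by left | right].
rewrite ins_bit_addC !natrD natr_wH_addC addrAC.
by congr (ins_bit _ (_ + _) _); apply: val_inj.
Qed.

Lemma iter_sigma_pext k u : u \in C ->
  exists2 v, v \in C &
    iter k (@cshift _ 4) (pext i u).1 = (pext i v).1 /\ iter k (@cshift _ b) u.2 = v.2.
Proof.
move=> uC; have : pext i u \in parity_ext i C by apply/imsetP; exists u.
by move/(cyclic_code_iter k C'_cyclic); rewrite iter_sigma => /imsetP[v vC [-> ->]]; exists v.
Qed.

Lemma even_wL u : u \in C -> (wL u.2)%:R = 0 :> 'Z_2.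
Proof.
move=> uC; have [v vC [rotE vE]] := iter_sigma_pext b uC.
have rot2E : iter b (@cshift _ 4) (pext i u).1 = iter 2 (@cshift _ 4) (pext i u).1.
  by rewrite {1}(divn_eq b 4) b_mod4 iterD iterM iter_fix // iter_cshift_id.
rewrite iter_cshift_id in vE; rewrite -(natr_wH_pext i) natr_wH; apply: sum_rot2.
by rewrite -rot2E rotE; apply: pext_same_Z4.
Qed.

Lemma wL2_partner x : wL x = 2%N -> exists a, wH a = 1%N /\ (a, x) \in C.
Proof.
move=> x_wt2; have [u uC] := perfect_code_covering C_perfect ((0 : 'rV_3), x).
rewrite /= sub0r wHN => u_close.
have xu : x = u.2.
  apply/eqP; rewrite -subr_eq0; apply/eqP/wL_eq0.
  have : (wL (x - u.2))%:R = 0 :> 'Z_2.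
    move: (natr_wLD (x - u.2) u.2); rewrite subrK x_wt2 (even_wL uC) addr0 => <-.
    exact: val_inj.
  have := leq_trans (leq_addl _ _) u_close.
  by case: (wL (x - u.2)) => [|[|?]] // _ /eqP.
have u_nz : u <> z24zero 3 b by move=> u0; move: x_wt2; rewrite xu u0 wL0.
exists u.1; split; last by rewrite xu -surjective_pairing.
have := perfect_code_dist C_perfect uC C_zero u_nz; rewrite /= !subr0 -xu x_wt2.
by move: u_close; rewrite -xu subrr wL0; lia.
Qed.

Lemma pext_weight3_alternating a x :
  (a, x) \in C -> (a, cshift x) \in C -> wH a = 1%N -> wL x = 2%N ->
  cshift (ins_bit i 1 a) = ins_bit i 1 a + const_mx 1.
Proof.
move=> axC ax'C a_wt1 x_wt2.
have pextE y : wL y = 2%N -> pext i (a, y) = (ins_bit i 1 a, y).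
  by move=> y_wt2; rewrite /pext /wt /= a_wt1 y_wt2; congr (ins_bit _ _ _, _); apply: val_inj.
have [v vC [rotE vE]] := iter_sigma_pext 1 axC.
rewrite pextE //= in rotE.
have := pext_same_Z4 ax'C vC vE; rewrite pextE ?wL_cshift //= -rotE.
case=> [/cshift_fixed w_const | //].
by have := wH_ins_bit i 1 a; rewrite w_const wH_const a_wt1; case: ifP.
Qed.

End ParityExtension.

Lemma not_cyclic_parity_ext_3_6 (C : {set Z2Z4 3 6}) (i : 'I_4) :
  additive_code C -> perfect_code C -> ~ cyclic_code (parity_ext i C).
Proof.
move=> [C_zero _] C_perfect C'_cyclic.
pose x (k : 'I_4) : 'rV['Z_4]_6 :=
  \row_j nth 0 (nth [::] [:: [:: 1; 1]; [:: 1; -1]; [:: 1; 0; 1]; [:: 1; 0; -1]] k) j.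
have x_wt2 k : wL (x k) = 2%N.
  by case: k => [[|[|[|[|?]]]] ?]; rewrite /wL !big_ord_recl big_ord0 /x !mxE.
have x_dist2 k l : k != l -> wL (x k - x l) = 2%N.
  case: k l => [[|[|[|[|?]]]] ?] [[|[|[|[|?]]]] ?] //;
  by rewrite /wL !big_ord_recl big_ord0 /x !mxE.
have [a aP] :=
  fin_all_exists (fun k => wL2_partner C_perfect C'_cyclic (erefl 2%N) C_zero (x_wt2 k)).
have a_inj : injective a.
  move=> k l; apply: contra_eq => kl.
  exact: (perfect_code_Z2_neq C_perfect (aP k).2 (aP l).2 (x_dist2 k l kl)).
have : (#|[set a k | k : 'I_4]| <= #|[set (delta_mx 0%R j : 'rV['Z_2]_3) | j : 'I_3]|)%N.
  apply/subset_leq_card/subsetP => _ /imsetP[k _ ->].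
  by have [j ->] := weight1_delta (aP k).1; apply: imset_f.
by rewrite card_imset // card_ord => /leq_trans/(_ (leq_imset_card _ _)); rewrite card_ord.
Qed.

Lemma not_cyclic_parity_ext_3_2 (C : {set Z2Z4 3 2}) (i : 'I_4) :
  additive_code C -> perfect_code C -> ~ cyclic_code (parity_ext i C).
Proof.
move=> [C_zero [_ C_opp]] C_perfect C'_cyclic.
pose x1 : 'rV['Z_4]_2 := \row_j [:: 1; 1]`_j.
pose x2 : 'rV['Z_4]_2 := \row_j [:: 1; -1]`_j.
have x1_wt2 : wL x1 = 2%N by rewrite /wL !big_ord_recl big_ord0 !mxE.
have x2_wt2 : wL x2 = 2%N by rewrite /wL !big_ord_recl big_ord0 !mxE.
have [a1 [a1_wt1 a1C]] := wL2_partner C_perfect C'_cyclic (erefl 2%N) C_zero x1_wt2.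
have [a2 [a2_wt1 a2C]] := wL2_partner C_perfect C'_cyclic (erefl 2%N) C_zero x2_wt2.
have a1'C : (a1, cshift x1) \in C.
  by congr (_ \in C): a1C; congr pair; apply/rowP => -[[|[|?]] ?]; rewrite !mxE.
have a2'C : (a2, cshift x2) \in C.
  congr (_ \in C): (C_opp _ a2C); congr pair; apply/rowP => j; rewrite !mxE.
    exact: (oppr_pchar2 Z2_pchar).
  by case: j => -[|[|?]] ?; apply: val_inj.
have a12 : a1 != a2.
  by apply: (perfect_code_Z2_neq C_perfect a1C a2C); rewrite /wL !big_ord_recl big_ord0 !mxE.
apply: (negP a12); apply/eqP; apply: (@ins_bit_inj _ i 1).
have alt1 := pext_weight3_alternating C_perfect C'_cyclic a1C a1'C a1_wt1 x1_wt2.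
have alt2 := pext_weight3_alternating C_perfect C'_cyclic a2C a2'C a2_wt1 x2_wt2.
by apply: (cshift_addC_inj alt1 alt2 (j := i)); rewrite !mxE unlift_none.
Qed.

Local Close Scope ring_scope.

Theorem lemma4p1 (r t : nat) :
  (r, t) = (2, 3) \/ (r, t) = (2, 4) ->
  forall (C : {set Z2Z4 (2 ^ r - 1) (2 ^ (t - 1) - 2 ^ (r - 1))})
         (i : 'I_(2 ^ r - 1).+1),
  additive_code C -> perfect_code C ->
  ~ cyclic_code (parity_ext i C).
Proof.
case=> [[-> ->]|[-> ->]] C i.
  exact: not_cyclic_parity_ext_3_2.
exact: not_cyclic_parity_ext_3_6.
Qed.
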